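(* Consider a two-user ($N=2$) multi-hop decode-and-forward relay network with $L\ge 2$ hops and a fixed relay assignment, with powers, SINRs and sum-rate as defined in the context. Then there exists a power allocation $\mathbf{P}^*=(P_{i,l}^* )_{i\in\{1,2\},\,l\in\{0,\dots,L-1\}}\in[0,P]^{2L}$ that maximizes the sum-rate $R(\mathbf{P})=\sum_{i=1}^{2}\log_2\!\big(1+\min_{l\in\{1,\dots,L\}}\gamma_{i,l}(\mathbf{P})\big)$ over $[0,P]^{2L}$ and satisfies, for each user $i\in\{1,2\}$, $\gamma_{i,1}(\mathbf{P}^* )=\gamma_{i,2}(\mathbf{P}^* )=\cdots=\gamma_{i,L}(\mathbf{P}^* )$; i.e., the SINRs of each user are equal in all hops.
   Context: Setup: there are two source–destination (S-D) pairs (users) $i\in\{1,2\}$, whose information travels over $L$ hops. For a fixed relay assignment, user $i$ uses a path of nodes $r_{i,0},r_{i,1},\dots,r_{i,L}$ (source $r_{i,0}$, destination $r_{i,L}$, distinct relays of the two users in each intermediate hop). In hop $l\in\{1,\dots,L\}$ the two transmitting nodes $r_{1,l-1},r_{2,l-1}$ transmit simultaneously with powers $P_{1,l-1},P_{2,l-1}\in[0,P]$, where $P>0$ is the maximum transmit power. Let $g_{j,i,l}=|h[r_{j,l-1},r_{i,l},l]|^2>0$ denote the channel power gain from the transmitter of user $j$ to the receiver of user $i$ in hop $l$, and let $\sigma^2>0$ be the noise variance. The SINR of user $i$ in hop $l$ (interference treated as noise, $j\neq i$ the other user) is $\gamma_{i,l}(\mathbf{P})=\dfrac{P_{i,l-1}\,g_{i,i,l}}{\sigma^2+P_{j,l-1}\,g_{j,i,l}}$.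 The end-to-end SINR of user $i$ is $\min_{l\in\{1,\dots,L\}}\gamma_{i,l}$ and the sum-rate is $R(\mathbf{P})=\sum_{i=1}^{2}\log_2(1+\min_{l}\gamma_{i,l}(\mathbf{P}))$. *)

From Stdlib Require Import Reals List Lia Lra.
Import ListNotations.
Open Scope R_scope.

(* Users are indexed by the naturals 1 and 2; the other user of i is 3 - i. *)
Definition other (i : nat) : nat := (3 - i)%nat.

(* Power allocation: Pw i k = P_{i,k} (transmit power of user i's node r_{i,k}),
   k in {0,...,L-1}.  Channel gains: g j i l = g_{j,i,l} (from transmitter of
   user j to receiver of user i in hop l), l in {1,...,L}.  The fixed relay
   assignment is encoded in the gains g. *)
Definition sinr (sigma2 : R) (g : nat -> nat -> nat -> R) (Pw : nat -> nat -> R)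
  (i l : nat) : R :=
  Pw i (l - 1)%nat * g i i l /
  (sigma2 + Pw (other i) (l - 1)%nat * g (other i) i l).

Definition min_sinr (L : nat) (sigma2 : R) (g : nat -> nat -> nat -> R)
  (Pw : nat -> nat -> R) (i : nat) : R :=
  fold_right Rmin (sinr sigma2 g Pw i 1%nat)
    (map (fun l => sinr sigma2 g Pw i l) (seq 1 L)).

Definition log2 (x : R) : R := ln x / ln 2.

Definition sum_rate (L : nat) (sigma2 : R) (g : nat -> nat -> nat -> R)
  (Pw : nat -> nat -> R) : R :=
  log2 (1 + min_sinr L sigma2 g Pw 1%nat) + log2 (1 + min_sinr L sigma2 g Pw 2%nat).

Definition feasible (L : nat) (Pmax : R) (Pw : nat -> nat -> R) : Prop :=
  forall i k : nat, (i = 1%nat \/ i = 2%nat) -> (k < L)%nat -> 0 <= Pw i k <= Pmax.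

From Stdlib Require Import Reals List Lia Lra Psatz.
Open Scope R_scope.

(* A maximizer exists by compactness: encoding allocations as points of the box
   [0, P]^(2L), the product (1 + γ_1)(1 + γ_2) of the end-to-end SINRs, which is
   2^R, is continuous.  Let P0 be a maximizer with end-to-end SINRs m1, m2.  In
   each hop the two SINR equations γ_1 = m1, γ_2 = m2 are linear in the hop's two
   powers; since the powers of P0 already achieve SINRs at least m1, m2, the
   solution is nonnegative and dominated by them.  Replacing every hop by this
   solution keeps the allocation feasible and makes each user's SINR equal to its
   end-to-end SINR in every hop, so the sum rate, hence optimality, is unchanged. *)

Lemma Rle_mult_of_le_div (x y z : R) : 0 < y -> z <= x / y -> z * y <= x.
Proof.
intros Hy H. apply (Rmult_le_compat_r y) in H; [|lra].
unfold Rdiv in H. rewrite Rmult_assoc, Rinv_l in H by lra. lra.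
Qed.

Lemma Rdiv_le_of_le_mult (x y z : R) : 0 < y -> x <= z * y -> x / y <= z.
Proof.
intros Hy H. apply (Rmult_le_reg_r y); [exact Hy|].
unfold Rdiv. rewrite Rmult_assoc, Rinv_l by lra. lra.
Qed.

Lemma Rdiv_nonneg (x y : R) : 0 <= x -> 0 < y -> 0 <= x / y.
Proof. intros Hx Hy. apply Rmult_le_pos; [exact Hx | left; apply Rinv_0_lt_compat, Hy]. Qed.

(* Solution [x = hop_power s a b c d m1 m2], [y = hop_power s b a d c m2 m1] of the
   linear system [x a = m1 (s + y c)], [y b = m2 (s + x d)] (Cramer's rule). *)
Definition hop_power (s a b c d m1 m2 : R) : R :=
  s * m1 * (b + m2 * c) / (a * b - m1 * m2 * c * d).

Section TwoUserHop.

Variables s a b c d m1 m2 X Y : R.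
Hypotheses (Hs : 0 < s) (Ha : 0 < a) (Hb : 0 < b) (Hc : 0 < c) (Hd : 0 < d)
  (Hm1 : 0 <= m1) (Hm2 : 0 <= m2) (HX : 0 <= X) (HY : 0 <= Y)
  (HXm1 : m1 <= X * a / (s + Y * c)) (HYm2 : m2 <= Y * b / (s + X * d)).

Lemma hop_det_bound : s * m1 * (b + m2 * c) <= X * (a * b - m1 * m2 * c * d).
Proof.
assert (H1 : m1 * (s + Y * c) <= X * a) by (apply Rle_mult_of_le_div; nra).
assert (H2 : m2 * (s + X * d) <= Y * b) by (apply Rle_mult_of_le_div; nra).
assert (m1 * c * (m2 * (s + X * d)) <= m1 * c * (Y * b))
  by (apply Rmult_le_compat_l; nra).
assert (b * (m1 * (s + Y * c)) <= b * (X * a)) by (apply Rmult_le_compat_l; lra).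
nra.
Qed.

Lemma hop_det_pos : 0 < a * b - m1 * m2 * c * d.
Proof.
pose proof hop_det_bound.
destruct (Req_dec m1 0) as [->|Hm1']; [nra|].
assert (0 < s * m1 * (b + m2 * c)) by (apply Rmult_lt_0_compat; nra).
destruct (Rle_lt_dec (a * b - m1 * m2 * c * d) 0); nra.
Qed.

Lemma hop_power_bounds : 0 <= hop_power s a b c d m1 m2 <= X.
Proof.
pose proof hop_det_bound; pose proof hop_det_pos.
unfold hop_power; split.
- apply Rdiv_nonneg; [|lra]. apply Rmult_le_pos; [apply Rmult_le_pos|]; nra.
- apply Rdiv_le_of_le_mult; lra.
Qed.

Lemma hop_power_sinr :
  hop_power s a b c d m1 m2 * a / (s + hop_power s b a d c m2 m1 * c) = m1.
Proof.
pose proof hop_det_pos as HE. clear HXm1 HYm2.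
assert (Hdet : b * a - m2 * m1 * d * c = a * b - m1 * m2 * c * d) by ring.
assert (0 <= s * m2 * (a + m1 * d) * c) by (repeat apply Rmult_le_pos; nra).
unfold hop_power. rewrite Hdet. field. split; nra.
Qed.

End TwoUserHop.

Lemma fold_Rmin_le_In (s : list R) (b x : R) : In x s -> fold_right Rmin b s <= x.
Proof.
induction s as [|a s IH]; simpl; [tauto|].
intros [->|H]; [apply Rmin_l|]. eapply Rle_trans; [apply Rmin_r|auto].
Qed.

Lemma fold_Rmin_const (s : list R) (b : R) :
  (forall x, In x s -> x = b) -> fold_right Rmin b s = b.
Proof.
induction s as [|a s IH]; simpl; intros H; [reflexivity|].
rewrite IH, (H a) by auto. apply Rmin_left. lra.
Qed.

Lemma fold_Rmin_nonneg (s : list R) (b : R) :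
  0 <= b -> (forall x, In x s -> 0 <= x) -> 0 <= fold_right Rmin b s.
Proof.
induction s as [|a s IH]; simpl; intros Hb H; [lra|].
apply Rmin_glb; auto.
Qed.

Local Notation user i := (i = 1%nat \/ i = 2%nat).

Lemma other_user (i : nat) : user i -> user (other i).
Proof. unfold other; lia. Qed.

Section Network.

Variables (L : nat) (Pmax sigma2 : R) (g : nat -> nat -> nat -> R).
Hypotheses (HL : (2 <= L)%nat) (Hs : 0 < sigma2)
  (Hg : forall j i l : nat, user j -> user i -> (1 <= l <= L)%nat -> 0 < g j i l).

Lemma sinr_hop1 (P : nat -> nat -> R) (k : nat) :
  sinr sigma2 g P 1 (S k) =
  P 1%nat k * g 1%nat 1%nat (S k) / (sigma2 + P 2%nat k * g 2%nat 1%nat (S k)).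
Proof. unfold sinr. simpl. rewrite Nat.sub_0_r. reflexivity. Qed.

Lemma sinr_hop2 (P : nat -> nat -> R) (k : nat) :
  sinr sigma2 g P 2 (S k) =
  P 2%nat k * g 2%nat 2%nat (S k) / (sigma2 + P 1%nat k * g 1%nat 2%nat (S k)).
Proof. unfold sinr. simpl. rewrite Nat.sub_0_r. reflexivity. Qed.

Lemma min_sinr_le_sinr (P : nat -> nat -> R) (i l : nat) :
  (1 <= l <= L)%nat -> min_sinr L sigma2 g P i <= sinr sigma2 g P i l.
Proof.
intros Hl. apply fold_Rmin_le_In, in_map, in_seq. lia.
Qed.

Lemma sinr_nonneg (P : nat -> nat -> R) (i l : nat) :
  feasible L Pmax P -> user i -> (1 <= l <= L)%nat -> 0 <= sinr sigma2 g P i l.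
Proof.
intros HP Hi Hl. pose proof (other_user i Hi) as Hj.
assert (0 <= P i (l - 1)%nat) by (apply HP; auto; lia).
assert (0 <= P (other i) (l - 1)%nat) by (apply HP; auto; lia).
assert (0 < g (other i) i l) by auto.
apply Rdiv_nonneg; [apply Rmult_le_pos; auto; left; auto | nra].
Qed.

Lemma min_sinr_nonneg (P : nat -> nat -> R) (i : nat) :
  feasible L Pmax P -> user i -> 0 <= min_sinr L sigma2 g P i.
Proof.
intros HP Hi. apply fold_Rmin_nonneg.
- apply sinr_nonneg; auto; lia.
- intros x Hx. apply in_map_iff in Hx. destruct Hx as [l [<- Hl%in_seq]].
  apply sinr_nonneg; auto; lia.
Qed.

Lemma min_sinr_ext (P Q : nat -> nat -> R) (i : nat) :
  (forall j k, user j -> (k < L)%nat -> P j k = Q j k) -> user i ->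
  min_sinr L sigma2 g P i = min_sinr L sigma2 g Q i.
Proof.
intros HPQ Hi.
assert (Hsinr : forall l, (1 <= l <= L)%nat -> sinr sigma2 g P i l = sinr sigma2 g Q i l).
{ intros l Hl. unfold sinr. rewrite !HPQ; auto using other_user; lia. }
unfold min_sinr. rewrite Hsinr by lia. f_equal.
apply map_ext_in. intros l Hl%in_seq. apply Hsinr. lia.
Qed.

(* Equal to [2 ^ sum_rate], but free of logarithms. *)
Definition rate_product (P : nat -> nat -> R) : R :=
  (1 + min_sinr L sigma2 g P 1) * (1 + min_sinr L sigma2 g P 2).

Lemma rate_product_ext (P Q : nat -> nat -> R) :
  (forall i k, user i -> (k < L)%nat -> P i k = Q i k) ->
  rate_product P = rate_product Q.
Proof.
intros HPQ. unfold rate_product. rewrite !(min_sinr_ext P Q) by auto. reflexivity.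
Qed.

Lemma sum_rate_le_of_rate_product_le (P Q : nat -> nat -> R) :
  feasible L Pmax P -> feasible L Pmax Q -> rate_product Q <= rate_product P ->
  sum_rate L sigma2 g Q <= sum_rate L sigma2 g P.
Proof.
intros HP HQ H. unfold rate_product in H.
pose proof (min_sinr_nonneg P 1 HP (or_introl eq_refl)).
pose proof (min_sinr_nonneg P 2 HP (or_intror eq_refl)).
pose proof (min_sinr_nonneg Q 1 HQ (or_introl eq_refl)).
pose proof (min_sinr_nonneg Q 2 HQ (or_intror eq_refl)).
unfold sum_rate, log2. rewrite <- !Rdiv_plus_distr, <- !ln_mult by lra.
apply Rmult_le_compat_r.
- left. apply Rinv_0_lt_compat. rewrite <- ln_1. apply ln_increasing; lra.
- destruct H as [H|H]; [left; apply ln_increasing; [nra|exact H] | rewrite H; lra].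
Qed.

(* In every hop, the powers that give the two users SINRs exactly equal to their
   end-to-end SINRs under [P]. *)
Definition equalize (P : nat -> nat -> R) (i k : nat) : R :=
  let m1 := min_sinr L sigma2 g P 1 in
  let m2 := min_sinr L sigma2 g P 2 in
  if Nat.eqb i 1
  then hop_power sigma2 (g 1%nat 1%nat (S k)) (g 2%nat 2%nat (S k))
         (g 2%nat 1%nat (S k)) (g 1%nat 2%nat (S k)) m1 m2
  else hop_power sigma2 (g 2%nat 2%nat (S k)) (g 1%nat 1%nat (S k))
         (g 1%nat 2%nat (S k)) (g 2%nat 1%nat (S k)) m2 m1.

Section Equalize.

Variable P : nat -> nat -> R.
Hypothesis HP : feasible L Pmax P.

Lemma equalize_hop (k : nat) : (k < L)%nat ->
  (0 <= equalize P 1 k <= P 1%nat k /\ 0 <= equalize P 2 k <= P 2%nat k) /\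
  (sinr sigma2 g (equalize P) 1 (S k) = min_sinr L sigma2 g P 1 /\
   sinr sigma2 g (equalize P) 2 (S k) = min_sinr L sigma2 g P 2).
Proof.
intros Hk.
assert (H1 := min_sinr_le_sinr P 1 (S k) ltac:(lia)). rewrite sinr_hop1 in H1.
assert (H2 := min_sinr_le_sinr P 2 (S k) ltac:(lia)). rewrite sinr_hop2 in H2.
assert (Hm1 := min_sinr_nonneg P 1 HP (or_introl eq_refl)).
assert (Hm2 := min_sinr_nonneg P 2 HP (or_intror eq_refl)).
assert (HX := proj1 (HP 1%nat k (or_introl eq_refl) Hk)).
assert (HY := proj1 (HP 2%nat k (or_intror eq_refl) Hk)).
rewrite sinr_hop1, sinr_hop2. unfold equalize. simpl.
refine (conj (conj _ _) (conj _ _)).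
- apply hop_power_bounds with (Y := P 2%nat k); try apply Hg; auto; lia.
- apply hop_power_bounds with (Y := P 1%nat k); try apply Hg; auto; lia.
- apply hop_power_sinr with (X := P 1%nat k) (Y := P 2%nat k); try apply Hg; auto; lia.
- apply hop_power_sinr with (X := P 2%nat k) (Y := P 1%nat k); try apply Hg; auto; lia.
Qed.

Lemma feasible_equalize : feasible L Pmax (equalize P).
Proof.
intros i k Hi Hk. destruct (equalize_hop k Hk) as [[B1 B2] _].
destruct Hi as [-> | ->]; [pose proof (HP 1%nat k) | pose proof (HP 2%nat k)];
  intuition lra.
Qed.

Lemma sinr_equalize (i l : nat) : user i -> (1 <= l <= L)%nat ->
  sinr sigma2 g (equalize P) i l = min_sinr L sigma2 g P i.
Proof.
intros Hi Hl. destruct l as [|k]; [lia|].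
destruct (equalize_hop k ltac:(lia)) as [_ [E1 E2]].
destruct Hi as [-> | ->]; assumption.
Qed.

Lemma min_sinr_equalize (i : nat) : user i ->
  min_sinr L sigma2 g (equalize P) i = min_sinr L sigma2 g P i.
Proof.
intros Hi. unfold min_sinr at 1. rewrite sinr_equalize by (auto; lia).
apply fold_Rmin_const. intros x Hx. apply in_map_iff in Hx.
destruct Hx as [l [<- Hl%in_seq]]. apply sinr_equalize; auto; lia.
Qed.

Lemma sum_rate_equalize : sum_rate L sigma2 g (equalize P) = sum_rate L sigma2 g P.
Proof.
unfold sum_rate. rewrite !min_sinr_equalize by auto. reflexivity.
Qed.

End Equalize.
End Network.

From mathcomp Require all_boot all_order all_algebra.
From mathcomp Require all_classical all_reals all_analysis Rstruct Rstruct_topology zify.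

Module Compactness.
Import all_boot all_order all_algebra all_classical all_reals all_analysis.
Import Rstruct Rstruct_topology zify.
Import Order.TTheory GRing.Theory Num.Theory numFieldNormedType.Exports.
Local Open Scope classical_set_scope.
Local Open Scope ring_scope.

Section Continuity.

Variable T : topologicalType.

Lemma continuous_fold_Rmin (f : nat -> T -> R) (b : T -> R) (s : list nat) :
  continuous b -> (forall l, In l s -> continuous (f l)) ->
  continuous (fun v => fold_right Rmin (b v) (map (fun l => f l v) s)).
Proof.
move=> cb; elim: s => [|a s IH] cf //=.
have -> : (fun v => Rmin (f a v) (fold_right Rmin (b v) (map (fun l => f l v) s)))
  = f a \min (fun v => fold_right Rmin (b v) (map (fun l => f l v) s)).
  by apply: funext => v; rewrite RminE.
move=> v; apply: continuous_min; first by apply: cf; left.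
by apply: IH => l Hl; apply: cf; right.
Qed.

Lemma continuous_sinr_form (a b : T -> R) (c1 c2 s : R) :
  continuous a -> continuous b -> 0 < s -> 0 <= c2 -> (forall v, 0 <= b v) ->
  continuous (fun v => Rdiv (Rmult (a v) c1) (Rplus s (Rmult (b v) c2))).
Proof.
move=> ca cb s0 c20 b0 v; rewrite /Rdiv.
apply: continuousM; first by apply: continuousM; [exact: ca | exact: cst_continuous].
apply: continuousV.
  by rewrite RplusE RmultE gt_eqF // ltr_pwDl // mulr_ge0.
apply: continuousD; first exact: cst_continuous.
by apply: continuousM; [exact: cb | exact: cst_continuous].
Qed.

End Continuity.

(* Coordinates [k] and [L + k] of [v] carry the powers of users 1 and 2 in hop
   [k + 1] (the last coordinate is unused).  The absolute value makes every [v] a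
   nonnegative allocation, so that all SINRs are continuous in [v] everywhere. *)
Definition rV_power (L : nat) (v : 'rV[R]_(L + L).+1) (i k : nat) : R :=
  Rabs (v ord0 (inord (if Nat.eqb i 1 then k else L + k))).

Definition power_box (L : nat) (Pmax : R) : set 'rV[R]_(L + L).+1 :=
  [set v | forall j, `[0, Pmax]%classic (v ord0 j)].

Lemma continuous_rV_power (L i k : nat) : continuous (fun v => rV_power L v i k).
Proof.
rewrite /rV_power; set j := inord _ => v.
exact: (continuous_comp (@coord_continuous R 1 _ ord0 j v) (@norm_continuous _ R^o _)).
Qed.

Lemma feasible_rV_power (L : nat) (Pmax : R) (v : 'rV[R]_(L + L).+1) :
  v \in power_box L Pmax -> feasible L Pmax (rV_power L v).
Proof.
rewrite in_setE => vbox i k _ _; rewrite /rV_power.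
have := vbox (inord (if Nat.eqb i 1 then k else L + k)).
rewrite /= in_itv /= => /andP[/RleP v0 /RleP vP].
by rewrite Rabs_right; [split | apply: Rle_ge].
Qed.

Lemma power_box_compact (L : nat) (Pmax : R) : compact (power_box L Pmax).
Proof.
exact: (@rV_compact R _ (fun=> `[0, Pmax]%classic) (fun=> @segment_compact R 0 Pmax)).
Qed.

Lemma rV_power_of_feasible (L : nat) (Pmax : R) (Q : nat -> nat -> R) :
  0 <= Pmax -> feasible L Pmax Q ->
  exists2 v, v \in power_box L Pmax &
    forall i k, user i -> (k < L)%coq_nat -> rV_power L v i k = Q i k.
Proof.
move=> P0 HQ.
pose v := \row_(j < (L + L).+1)
  (if (j < L)%N then Q 1%N j else if (j < L + L)%N then Q 2%N (j - L)%N else 0).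
exists v.
  rewrite in_setE => j /=; rewrite mxE in_itv /=.
  case: ifP => jL.
    by have [/RleP -> /RleP ->] := HQ 1%N j (or_introl erefl) (elimT ssrnat.ltP jL).
  case: ifP => jLL; last by rewrite lexx.
  have jL' : (j - L < L)%coq_nat by apply/ssrnat.ltP; lia.
  by have [/RleP -> /RleP ->] := HQ 2%N (j - L)%N (or_intror erefl) jL'.
move=> i k Hi kL; have [/RleP Q0 _] := HQ i k Hi kL; move/ssrnat.ltP: kL => kL.
rewrite /rV_power mxE; case: Hi Q0 => -> Q0 /=; rewrite inordK; try lia.
- by rewrite kL Rabs_right //; apply/Rle_ge/RleP.
- have -> : (L + k < L)%N = false by lia.
  have -> : (L + k < L + L)%N by lia.
  by rewrite addKn Rabs_right //; apply/Rle_ge/RleP.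
Qed.

Section Existence.

Variables (L : nat) (Pmax sigma2 : R) (g : nat -> nat -> nat -> R).
Local Open Scope R_scope.
Hypotheses (HL : (2 <= L)%coq_nat) (HP : 0 < Pmax) (Hs : 0 < sigma2)
  (Hg : forall j i l : nat, user j -> user i -> (1 <= l /\ l <= L)%coq_nat -> 0 < g j i l).

Lemma continuous_rate_product :
  continuous (fun v => rate_product L sigma2 g (rV_power L v)).
Proof.
have csinr i l : user i -> (1 <= l /\ l <= L)%coq_nat ->
    continuous (fun v => sinr sigma2 g (rV_power L v) i l).
  move=> Hi Hl; apply: continuous_sinr_form; try exact: continuous_rV_power.
  - exact/RltP.
  - by apply/RleP/Rlt_le/Hg => //; exact: other_user.
  - by move=> v; apply/RleP/Rabs_pos.
have cmin i : user i -> continuous (fun v => min_sinr L sigma2 g (rV_power L v) i).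
  move=> Hi; apply: continuous_fold_Rmin; first by apply: csinr => //; lia.
  by move=> l /in_seq Hl; apply: csinr => //; lia.
move=> v; apply: continuousM; apply: continuousD; try exact: cst_continuous.
- by apply: cmin; left.
- by apply: cmin; right.
Qed.

Lemma sum_rate_max_exists : exists P0 : nat -> nat -> R, feasible L Pmax P0 /\
  (forall Q, feasible L Pmax Q -> sum_rate L sigma2 g Q <= sum_rate L sigma2 g P0).
Proof.
have Pmax0 : (0 <= Pmax)%R by apply/ltW/RltP.
have box0 : power_box L Pmax !=set0 by exists 0%R => j /=; rewrite mxE in_itv /= lexx.
have [c /feasible_rV_power cbox cmax] := compact_EVT_max box0 (power_box_compact L Pmax)
  (continuous_subspaceT continuous_rate_product).
exists (rV_power L c); split => // Q HQ.
have [v vbox agree] := rV_power_of_feasible _ _ _ Pmax0 HQ.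
apply: (sum_rate_le_of_rate_product_le _ Pmax) => //.
rewrite -(rate_product_ext _ _ _ HL _ _ agree); exact/RleP/cmax.
Qed.

End Existence.

End Compactness.

Theorem lemma1 (L : nat) (HL : (2 <= L)%nat) (Pmax sigma2 : R)
  (HP : 0 < Pmax) (Hs : 0 < sigma2) (g : nat -> nat -> nat -> R)
  (Hg : forall j i l : nat, (j = 1%nat \/ j = 2%nat) -> (i = 1%nat \/ i = 2%nat) ->
        (1 <= l <= L)%nat -> 0 < g j i l) :
  exists Pstar : nat -> nat -> R,
    feasible L Pmax Pstar /\
    (forall Q : nat -> nat -> R, feasible L Pmax Q ->
       sum_rate L sigma2 g Q <= sum_rate L sigma2 g Pstar) /\
    (forall i : nat, (i = 1%nat \/ i = 2%nat) ->
       forall l : nat, (1 <= l <= L)%nat ->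
         sinr sigma2 g Pstar i l = sinr sigma2 g Pstar i 1%nat).
Proof.
destruct (Compactness.sum_rate_max_exists L Pmax sigma2 g HL HP Hs Hg) as [P0 [HP0 Hopt]].
exists (equalize L sigma2 g P0). split; [|split].
- exact (feasible_equalize L Pmax sigma2 g HL Hs Hg P0 HP0).
- intros Q HQ. rewrite (sum_rate_equalize L Pmax sigma2 g HL Hs Hg P0 HP0). auto.
- intros i Hi l Hl.
  rewrite !(sinr_equalize L Pmax sigma2 g HL Hs Hg P0 HP0) by (auto; lia).
  reflexivity.
Qed.
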